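(* Let $S=s_1,\ldots,s_n$ be a sequence of nonnegative integers, $\gamma>0$ and $k$ a positive integer. Let $(L,\alpha,\beta)$ be an optimal solution of $\textsc{Geo}$ for $S,\gamma,k$, with $L=\ell_1,\ldots,\ell_n$. If there is an index $j$ with $s_j\ell_j\ne0$, then $\alpha\ge\frac{1}{1+nk}$.
   Context: A level sequence is $L=\ell_1,\ldots,\ell_n$ of integers with $0\le\ell_i\le k$; set $\ell_0=0$. The penalty is $\mathrm{pen}(x,y)=\max(y-x,0)\,\gamma\log n$. The geometric distribution is $p_{\mathrm{geo}}(s;\lambda)=(1-\lambda)\lambda^s$ (with $0^0=1$). For $0\le\alpha<1$, $0<\beta<1$: $\mathrm{score}_{\mathrm{geo}}(L,S;\alpha,\beta,\gamma)=\sum_{i=1}^n\big[-\log p_{\mathrm{geo}}(s_i;\beta\alpha^{\ell_i})+\mathrm{pen}(\ell_{i-1},\ell_i)\big]$. Problem $\textsc{Geo}$: given $S,\gamma,k$, find $L$, $\alpha$ and $\beta$ minimizing this score. *)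

(* concrete reals R, with Coquelicot's extended reals Rbar
   to represent the value +infinity of -log 0. *)
From Stdlib Require Import Reals.
From Coquelicot Require Import Coquelicot.
Open Scope R_scope.

(* -log p_geo(s; lam), where p_geo(s;lam) = (1-lam) lam^s (pow 0 0 = 1).
   Equals +oo when the probability is 0 (lam = 0, s > 0). *)
Definition neglog_geo (s : nat) (lam : R) : Rbar :=
  let p := (1 - lam) * lam ^ s in
  if Rlt_dec 0 p then Finite (- ln p) else p_infty.

Definition pen (n : nat) (gamma : R) (x y : nat) : R :=
  Rmax (INR y - INR x) 0 * gamma * ln (INR n).

(* Sequences are indexed 1..n; the level before index 1 is l_0 = 0. *)
Definition prev_level (L : nat -> nat) (i : nat) : nat :=
  match i with O => O | S O => O | S j => L j end.

Definition term_geo (n : nat) (S L : nat -> nat) (alpha beta gamma : R) (i : nat) : Rbar :=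
  Rbar_plus (neglog_geo (S i) (beta * alpha ^ (L i)))
            (Finite (pen n gamma (prev_level L i) (L i))).

Fixpoint score_upto (n : nat) (S L : nat -> nat) (alpha beta gamma : R) (m : nat) : Rbar :=
  match m with
  | O => Finite 0
  | Datatypes.S m' => Rbar_plus (score_upto n S L alpha beta gamma m')
                                (term_geo n S L alpha beta gamma m)
  end.

Definition score_geo (n : nat) (S L : nat -> nat) (alpha beta gamma : R) : Rbar :=
  score_upto n S L alpha beta gamma n.

Definition level_seq (n k : nat) (L : nat -> nat) : Prop :=
  forall i, (1 <= i <= n)%nat -> (L i <= k)%nat.

Definition feasible_geo (n k : nat) (L : nat -> nat) (alpha beta : R) : Prop :=
  level_seq n k L /\ 0 <= alpha < 1 /\ 0 < beta < 1.

Definition optimal_geo (n : nat) (S : nat -> nat) (gamma : R) (k : nat)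
  (L : nat -> nat) (alpha beta : R) : Prop :=
  feasible_geo n k L alpha beta /\
  forall L' alpha' beta', feasible_geo n k L' alpha' beta' ->
    Rbar_le (score_geo n S L alpha beta gamma) (score_geo n S L' alpha' beta' gamma).

(* Suppose alpha < c := 1/(1+nk) and compare with the solution (L, c, beta).
   Each term changes by s_i l_i (ln c - ln alpha) from the factor alpha^(l_i),
   while the change of -log(1 - beta alpha^(l_i)) is at most k (c - alpha)/(1 - c);
   the penalties do not change.  Summed over the n positions, the choice of c
   makes the latter total (c - alpha)/c = 1 - alpha/c, which is strictly below
   ln c - ln alpha since ln x < x - 1 for x <> 1, so (L, c, beta) scores strictly
   better.  For alpha = 0 the position j has probability 0 and the score is +oo. *)

From Stdlib Require Import Reals Lra Lia.
From Coquelicot Require Import Coquelicot.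
Open Scope R_scope.

Lemma ln_le_sub_1 x : 0 < x -> ln x <= x - 1.
Proof.
  intros Hx. pose proof (exp_ineq1_le (ln x)) as Hexp.
  rewrite exp_ln in Hexp by exact Hx. lra.
Qed.

Lemma ln_lt_sub_1 x : 0 < x -> x <> 1 -> ln x < x - 1.
Proof.
  intros Hx Hx1. pose proof (exp_ineq1 (ln x) (ln_neq_0 x Hx1 Hx)) as Hexp.
  rewrite exp_ln in Hexp by exact Hx. lra.
Qed.

Lemma ln_div x y : 0 < x -> 0 < y -> ln (x / y) = ln x - ln y.
Proof.
  intros Hx Hy. unfold Rdiv.
  rewrite ln_mult, ln_Rinv by (try apply Rinv_0_lt_compat; assumption). ring.
Qed.

Lemma ln_sub_ln_le u v : 0 < u -> 0 < v -> ln u - ln v <= (u - v) / v.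
Proof.
  intros Hu Hv. rewrite <- ln_div by assumption.
  replace ((u - v) / v) with (u / v - 1) by (field; lra).
  apply ln_le_sub_1, Rdiv_lt_0_compat; assumption.
Qed.

Lemma sub_div_lt_ln_sub_ln a c : 0 < a < c -> (c - a) / c < ln c - ln a.
Proof.
  intros Hac.
  assert (Hne : a / c <> 1).
  { intros Heq. unfold Rdiv in Heq.
    apply Rmult_eq_compat_r with (r := c) in Heq.
    rewrite Rmult_assoc, Rinv_l in Heq by lra. lra. }
  pose proof (ln_lt_sub_1 (a / c) ltac:(apply Rdiv_lt_0_compat; lra) Hne) as Hlt.
  rewrite ln_div in Hlt by lra.
  replace ((c - a) / c) with (1 - a / c) by (field; lra). lra.
Qed.

Lemma pow_le_1 x l : 0 <= x <= 1 -> x ^ l <= 1.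
Proof. intros Hx. rewrite <- (pow1 l). apply pow_incr. exact Hx. Qed.

Lemma pow_sub_pow_le a c l : 0 <= a <= c -> c <= 1 -> c ^ l - a ^ l <= INR l * (c - a).
Proof.
  intros Hac Hc1. induction l as [|l IH]; [simpl; lra|].
  rewrite S_INR; simpl.
  assert (Hal : 0 <= a ^ l <= 1) by (split; [apply pow_le | apply pow_le_1]; lra).
  assert (Hacl : a ^ l <= c ^ l) by (apply pow_incr; lra).
  (* c^(l+1) - a^(l+1) = c (c^l - a^l) + a^l (c - a) *)
  nra.
Qed.

Lemma ln_one_sub_pow_sub_le a c beta l k :
  0 < a < c -> c < 1 -> 0 < beta <= 1 -> (l <= k)%nat ->
  ln (1 - beta * a ^ l) - ln (1 - beta * c ^ l) <= INR k * (c - a) / (1 - c).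
Proof.
  intros Hac Hc1 Hb Hlk.
  assert (Hbound : 0 <= INR k * (c - a) / (1 - c)).
  { apply Rdiv_le_0_compat; [apply Rmult_le_pos; [apply pos_INR | lra] | lra]. }
  destruct l as [|l]; [simpl; lra|].
  set (u := 1 - beta * a ^ S l). set (v := 1 - beta * c ^ S l).
  assert (Hacl : a ^ S l <= c ^ S l) by (apply pow_incr; lra).
  assert (Hcl : c ^ S l <= c) by (simpl; pose proof (pow_le_1 c l); nra).
  assert (Hv : 1 - c <= v) by (unfold v; nra).
  assert (Hu : 0 < u) by (unfold u; nra).
  assert (Huv : 0 <= u - v <= INR k * (c - a)).
  { pose proof (pow_sub_pow_le a c (S l) ltac:(lra) ltac:(lra)).
    pose proof (le_INR _ _ Hlk). unfold u, v. nra. }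
  apply Rle_trans with ((u - v) / v); [apply ln_sub_ln_le; lra|].
  apply Rmult_le_compat; [lra | left; apply Rinv_0_lt_compat; lra | lra |].
  apply Rinv_le_contravar; lra.
Qed.

Definition geo_nll (s : nat) (lam : R) : R := - ln (1 - lam) - INR s * ln lam.

Lemma neglog_geo_finite s lam : 0 < lam < 1 -> neglog_geo s lam = Finite (geo_nll s lam).
Proof.
  intros Hlam. unfold neglog_geo, geo_nll.
  assert (Hp : 0 < (1 - lam) * lam ^ s) by (apply Rmult_lt_0_compat; [lra | apply pow_lt; lra]).
  destruct (Rlt_dec 0 _) as [_|Hn]; [|contradiction].
  rewrite ln_mult, ln_pow by (try apply pow_lt; lra). f_equal. ring.
Qed.

Lemma neglog_geo_0 s : (0 < s)%nat -> neglog_geo s 0 = p_infty.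
Proof.
  intros Hs. unfold neglog_geo. rewrite pow_i, Rmult_0_r by exact Hs.
  destruct (Rlt_dec 0 0) as [H|_]; [lra | reflexivity].
Qed.

Lemma geo_nll_sub_ge s l k a c beta :
  0 < a < c -> c < 1 -> 0 < beta < 1 -> (l <= k)%nat ->
  INR (s * l) * (ln c - ln a) - INR k * (c - a) / (1 - c)
  <= geo_nll s (beta * a ^ l) - geo_nll s (beta * c ^ l).
Proof.
  intros Hac Hc1 Hb Hlk. unfold geo_nll.
  pose proof (ln_one_sub_pow_sub_le a c beta l k Hac Hc1 ltac:(lra) Hlk).
  rewrite mult_INR, !ln_mult, !ln_pow by (try apply pow_lt; lra). lra.
Qed.

Fixpoint sum_upto (f : nat -> R) (m : nat) : R :=
  match m with
  | O => 0
  | S m' => sum_upto f m' + f m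
  end.

Lemma sum_upto_affine f g e m :
  sum_upto (fun i => f i - g i + e) m = sum_upto f m - sum_upto g m + INR m * e.
Proof. induction m as [|m IH]; [simpl; ring|]. rewrite S_INR. simpl. rewrite IH. ring. Qed.

Lemma sum_upto_ge_term f m j :
  (forall i, (1 <= i <= m)%nat -> 0 <= f i) -> (1 <= j <= m)%nat -> f j <= sum_upto f m.
Proof.
  intros Hf Hj.
  assert (Hnn : forall m', (m' <= m)%nat -> 0 <= sum_upto f m').
  { induction m' as [|m' IH]; intros Hm; simpl; [lra|].
    pose proof (IH ltac:(lia)). pose proof (Hf (S m') ltac:(lia)). lra. }
  induction m as [|m IH]; [lia|]. simpl.
  destruct (Nat.eq_dec j (S m)) as [->|Hne].
  - pose proof (Hnn m ltac:(lia)). lra.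
  - pose proof (Hf (S m) ltac:(lia)).
    assert (f j <= sum_upto f m); [|lra].
    apply IH; [intros i Hi; apply Hf; lia | lia | intros m' Hm; apply Hnn; lia].
Qed.

Definition term_geo_R (n : nat) (s L : nat -> nat) (a beta gamma : R) (i : nat) : R :=
  geo_nll (s i) (beta * a ^ L i) + pen n gamma (prev_level L i) (L i).

Lemma term_geo_finite n s L a beta gamma i : 0 < a <= 1 -> 0 < beta < 1 ->
  term_geo n s L a beta gamma i = Finite (term_geo_R n s L a beta gamma i).
Proof.
  intros Ha Hb. unfold term_geo, term_geo_R.
  assert (0 < a ^ L i <= 1) by (split; [apply pow_lt | apply pow_le_1]; lra).
  rewrite neglog_geo_finite by (split; [apply Rmult_lt_0_compat|]; nra).
  reflexivity.
Qed.

Lemma score_upto_finite n s L a beta gamma m : 0 < a <= 1 -> 0 < beta < 1 ->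
  score_upto n s L a beta gamma m = Finite (sum_upto (term_geo_R n s L a beta gamma) m).
Proof.
  intros Ha Hb. induction m as [|m IH]; [reflexivity|].
  simpl. rewrite IH, term_geo_finite by assumption. reflexivity.
Qed.

Lemma term_geo_neq_m_infty n s L a beta gamma i : term_geo n s L a beta gamma i <> m_infty.
Proof. unfold term_geo, neglog_geo. destruct (Rlt_dec _ _); discriminate. Qed.

Lemma score_upto_neq_m_infty n s L a beta gamma m : score_upto n s L a beta gamma m <> m_infty.
Proof.
  induction m as [|m IH]; simpl; [discriminate|].
  pose proof (term_geo_neq_m_infty n s L a beta gamma (S m)).
  destruct (score_upto _ _ _ _ _ _ m), (term_geo _ _ _ _ _ _ (S m)); simpl; congruence.
Qed.

Lemma score_upto_p_infty n s L a beta gamma m j : (1 <= j <= m)%nat ->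
  term_geo n s L a beta gamma j = p_infty -> score_upto n s L a beta gamma m = p_infty.
Proof.
  intros Hj Htj. induction m as [|m IH]; [lia|]. simpl.
  destruct (Nat.eq_dec j (S m)) as [->|Hne].
  - rewrite Htj. pose proof (score_upto_neq_m_infty n s L a beta gamma m).
    destruct (score_upto _ _ _ _ _ _ m); simpl; congruence.
  - rewrite IH by lia. pose proof (term_geo_neq_m_infty n s L a beta gamma (S m)).
    destruct (term_geo _ _ _ _ _ _ (S m)); simpl; congruence.
Qed.

Lemma inv_1_add_bounds x : 0 < x -> 0 < / (1 + x) < 1.
Proof.
  intros Hx. split; [apply Rinv_0_lt_compat; lra|].
  rewrite <- Rinv_1. apply Rinv_lt_contravar; lra.
Qed.

Lemma score_sum_lt_at_threshold n k s L a beta gamma j :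
  (0 < k)%nat -> level_seq n k L -> 0 < beta < 1 ->
  (1 <= j <= n)%nat -> (s j * L j <> 0)%nat ->
  0 < a < / (1 + INR n * INR k) ->
  sum_upto (term_geo_R n s L (/ (1 + INR n * INR k)) beta gamma) n
  < sum_upto (term_geo_R n s L a beta gamma) n.
Proof.
  intros Hk Hlev Hb Hj Hsl. set (c := / (1 + INR n * INR k)). intros Ha.
  assert (Hn0 : 0 < INR n) by (apply lt_0_INR; lia).
  assert (Hk0 : 0 < INR k) by (apply lt_0_INR; lia).
  assert (Hnk : 0 < INR n * INR k) by (apply Rmult_lt_0_compat; assumption).
  assert (Hc : 0 < c < 1) by (apply inv_1_add_bounds, Hnk).
  set (Lam := ln c - ln a). set (E := INR k * (c - a) / (1 - c)).
  set (d i := term_geo_R n s L a beta gamma i - term_geo_R n s L c beta gamma i + E).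
  assert (HLam : 0 < Lam) by (unfold Lam; pose proof (ln_increasing a c ltac:(lra) ltac:(lra)); lra).
  assert (Hd : forall i, (1 <= i <= n)%nat -> INR (s i * L i) * Lam <= d i).
  { intros i Hi. unfold d, term_geo_R.
    pose proof (geo_nll_sub_ge (s i) (L i) k a c beta ltac:(lra) ltac:(lra) Hb (Hlev i Hi))
      as Hgap.
    fold Lam E in Hgap. lra. }
  assert (Hdj : Lam <= d j).
  { pose proof (le_INR 1 (s j * L j) ltac:(lia)) as Hsl1. simpl in Hsl1.
    pose proof (Hd j Hj). nra. }
  assert (Hsum : d j <= sum_upto d n).
  { apply sum_upto_ge_term; [|exact Hj].
    intros i Hi. pose proof (Hd i Hi). pose proof (pos_INR (s i * L i)). nra. }
  assert (Hsplit : sum_upto d n = sum_upto (term_geo_R n s L a beta gamma) n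
                    - sum_upto (term_geo_R n s L c beta gamma) n + INR n * E)
    by apply sum_upto_affine.
  (* c is chosen so that 1 - c = n k c, which makes n E equal to (c - a) / c *)
  assert (HnE : INR n * E = (c - a) / c).
  { assert (H1c : 1 - c = INR n * INR k * c) by (unfold c; field; lra).
    unfold E. rewrite H1c. field. lra. }
  pose proof (sub_div_lt_ln_sub_ln a c ltac:(lra)) as Hlog. fold Lam in Hlog. lra.
Qed.

Theorem lemma6 (n : nat) (S : nat -> nat) (gamma : R) (k : nat)
  (L : nat -> nat) (alpha beta : R) :
  0 < gamma -> (0 < k)%nat ->
  optimal_geo n S gamma k L alpha beta ->
  (exists j, (1 <= j <= n)%nat /\ (S j * L j <> 0)%nat) ->
  alpha >= / (1 + INR n * INR k).
Proof.
  intros _ Hk [[Hlev [Ha Hb]] Hopt] [j [Hj Hsl]].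
  apply Rnot_lt_ge. intros Hlt.
  set (c := / (1 + INR n * INR k)) in *.
  assert (Hc : 0 < c < 1).
  { apply inv_1_add_bounds, Rmult_lt_0_compat; apply lt_0_INR; lia. }
  specialize (Hopt L c beta (conj Hlev (conj (conj (Rlt_le _ _ (proj1 Hc)) (proj2 Hc)) Hb))).
  unfold score_geo in Hopt. rewrite (score_upto_finite _ _ _ c) in Hopt by lra.
  destruct (proj1 Ha) as [Ha0|<-].
  - rewrite score_upto_finite in Hopt by lra. simpl in Hopt.
    assert (Hac : 0 < alpha < c) by lra.
    pose proof (score_sum_lt_at_threshold n k S L alpha beta gamma j Hk Hlev Hb Hj Hsl Hac)
      as Hlt_sum.
    fold c in Hlt_sum. lra.
  - rewrite (score_upto_p_infty _ _ _ _ _ _ _ j Hj) in Hopt; [exact Hopt|].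
    unfold term_geo. rewrite pow_i, Rmult_0_r, neglog_geo_0 by lia. reflexivity.
Qed.
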